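(* For every $d\ge1$ and every $1\le i\le d$, $H_{i,d}>0$.
   Context: For integers $i,d\ge -1$ define $f_{-1,-1}=1$, $f_{-1,d}=0$ for $d\ge0$, $f_{i,-1}=0$ for $i\ge0$, and $f_{i,d}=(i+1)!\,S(d+1,i+1)$ for $i,d\ge0$, where $S(\cdot,\cdot)$ is the Stirling number of the second kind. For $d\ge0$ define rational numbers $F_{i,d}$, $-1\le i\le d$, by $F_{d,d}=1$ and recursively for $-1\le i\le d-1$, $F_{i,d}=\frac{1}{(d+1)!-(i+1)!}\sum_{j=i+1}^{d}f_{i,j}F_{j,d}$. Let $F_d(z)=\sum_{i=-1}^dF_{i,d}z^{d-i}$, and define the $H$-polynomial $H_d(z)=F_d(z-1)=\sum_{i=0}^{d+1}H_{i,d}z^{d+1-i}$, which defines the numbers $H_{i,d}$. *)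

(* Paper indices i,d >= -1 are shifted by one: a = i+1, b = d+1. *)
From HB Require Import structures.
From mathcomp Require Import all_boot all_order all_algebra.
Set Implicit Arguments. Unset Strict Implicit. Unset Printing Implicit Defensive.
Import Order.TTheory GRing.Theory Num.Theory.
Local Open Scope ring_scope.

Fixpoint stirling2 (n k : nat) : nat :=
  match n, k with
  | 0, 0 => 1
  | 0, _.+1 => 0
  | _.+1, 0 => 0
  | n'.+1, k'.+1 => (k'.+1 * stirling2 n' k'.+1 + stirling2 n' k')%N
  end.

(* fsh a b = f_{a-1,b-1} of the paper. *)
Definition fsh (a b : nat) : rat :=
  match a, b with
  | 0, 0 => 1
  | 0, _.+1 => 0
  | _.+1, 0 => 0
  | a'.+1, b'.+1 => ((a'.+1)`! * stirling2 b'.+1 a'.+1)%:R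
  end.

(* Ftail d n = [:: F_{d-n-1,d}; ...; F_{d,d}] (paper indices), built by the
   downward recursion F_{i,d} = ((d+1)! - (i+1)!)^-1 * sum_{j=i+1}^d f_{i,j} F_{j,d}. *)
Fixpoint Ftail (d n : nat) : seq rat :=
  match n with
  | 0 => [:: 1]
  | n'.+1 =>
      let s := Ftail d n' in
      let a := (d.+1 - n)%N in
      (((d.+1)`!)%:R - (a`!)%:R)^-1 *
        (\sum_(k < size s) fsh a (a + k.+1) * s`_k) :: s
  end.

(* Fsh d a = F_{a-1,d}, for 0 <= a <= d+1. *)
Definition Fsh (d a : nat) : rat := nth 0 (Ftail d d.+1) a.

Definition Fpoly (d : nat) : {poly rat} :=
  \sum_(a < d.+2) Fsh d a *: 'X^(d.+1 - a).

Definition Hpoly (d : nat) : {poly rat} := Fpoly d \Po ('X - 1).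

Definition Hcoef (i d : nat) : rat := (Hpoly d)`_(d.+1 - i).

(* Write E_n(z) = sum_a a! S(n,a) z^(n-a) and let Phi_n be the linear operator
   z^m |-> z^m E_(n-m)(z) on polynomials of degree at most n.  In the monomial basis
   Phi_(d+1) is triangular with entries f_(i,j), so the recursion defining F_(i,d)
   says exactly that F_d is an eigenvector of Phi_(d+1) for the eigenvalue (d+1)!,
   which is simple.  Conjugating by the shift z |-> z - 1 turns Phi_n into the
   operator Psi_n sending z^k to the ascent polynomial of the permutations of
   [n+1] ending with k+1; its matrix is nonnegative, its columns all sum to n!,
   and its rows 1..n-1 are positive.  Hence H_d is an eigenvector of Psi_(d+1)
   for its column sum, so |H_d| is one as well (Perron-Frobenius), simplicity
   makes |H_d| a nonnegative multiple of H_d, and H_d >= 0.  Finally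
   (d+1)! H_(i,d) is a nonnegative combination of positive numbers with weights
   summing to H_d(1) = F_d(0) = 1. *)

From HB Require Import structures.
From mathcomp Require Import all_boot all_order all_algebra.
From mathcomp Require Import ring zify.
Import Order.TTheory GRing.Theory Num.Theory.
Set Implicit Arguments. Unset Strict Implicit. Unset Printing Implicit Defensive.
Local Open Scope ring_scope.

Lemma fact_ltn_gt1 a n : (a < n)%N -> (1 < n)%N -> (a`! < n`!)%N.
Proof.
case: a => [|a] lt_an gt1_n; last exact: ltn_fact.
exact: leq_trans gt1_n (fact_geq n).
Qed.

Lemma exprD1_geometric (R : comNzRingType) (x : R) n :
  (x + 1) ^+ n = 1 + x * \sum_(j < n) (x + 1) ^+ j.
Proof.
elim: n => [|n IH]; first by rewrite big_ord0 mulr0 addr0 expr0.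
by rewrite big_ord_recr /= exprS mulrDl mul1r {2}IH; ring.
Qed.

Lemma comp_poly_Xadd1K (R : nzRingType) (p : {poly R}) :
  (p \Po ('X + 1)) \Po ('X - 1) = p.
Proof. by have := comp_polyXaddC_K p 1; rewrite polyC1. Qed.

Lemma comp_poly_Xsub1K (R : nzRingType) (p : {poly R}) :
  (p \Po ('X - 1)) \Po ('X + 1) = p.
Proof. by have := comp_polyXaddC_K p (-1); rewrite polyCN opprK polyC1. Qed.

Lemma lreg_polyX (R : nzRingType) : GRing.lreg ('X : {poly R}).
Proof. by apply: lreg_lead; rewrite lead_coefX; apply: lreg1. Qed.

Lemma coefK_wide (R : nzSemiRingType) (p : {poly R}) n :
  (size p <= n)%N -> \poly_(i < n) p`_i = p.
Proof.
move=> size_p; apply/polyP => i; rewrite coef_poly.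
by case: ltnP => // le_ni; rewrite (leq_sizeP _ _ size_p).
Qed.

Lemma horner1_coef_wide (R : nzSemiRingType) (p : {poly R}) n :
  (size p <= n)%N -> p.[1] = \sum_(i < n) p`_i.
Proof.
move=> size_p; rewrite (horner_coef_wide _ size_p).
by apply: eq_bigr => i _; rewrite expr1n mulr1.
Qed.

Lemma sumr_nat_gt0 (R : numDomainType) (F : nat -> R) m n j :
  (m <= j < n)%N -> (forall i, 0 <= F i) -> 0 < F j -> 0 < \sum_(m <= i < n) F i.
Proof.
move=> lt_j F_ge0 Fj_gt0; rewrite (big_rem j) ?mem_index_iota //=.
by apply: ltr_wpDr => //; apply: sumr_ge0.
Qed.

Lemma sumr_mul_gt0 (R : numDomainType) n (a b : 'I_n -> R) :
  (forall k, 0 <= a k) -> (forall k, 0 < b k) -> \sum_k a k != 0 -> 0 < \sum_k a k * b k.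
Proof.
move=> a_ge0 b_gt0 sum_a; have ab_ge0 k : 0 <= a k * b k by rewrite mulr_ge0 // ltW.
rewrite lt_def sumr_ge0 // andbT; apply: contra sum_a => /eqP sum_ab.
apply/eqP/big1 => k _; have /eqP := psumr_eq0P (fun k _ => ab_ge0 k) sum_ab (i := k) isT.
by rewrite mulf_eq0 (gt_eqF (b_gt0 k)) orbF => /eqP.
Qed.

Lemma eigenvector_norm (R : realDomainType) n (A : 'I_n -> 'I_n -> R) (h : 'I_n -> R) lam :
  (forall s k, 0 <= A s k) -> (forall k, \sum_s A s k = lam) ->
  (forall s, \sum_k A s k * h k = lam * h s) ->
  forall s, \sum_k A s k * `|h k| = lam * `|h s|.
Proof.
move=> A_ge0 col_sum eig s0.
have lam_ge0 : 0 <= lam by rewrite -(col_sum s0); apply: sumr_ge0.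
pose excess s := \sum_k A s k * `|h k| - lam * `|h s|.
have excess_ge0 s : 0 <= excess s.
  rewrite subr_ge0 -(ger0_norm lam_ge0) -normrM -eig.
  apply: le_trans (ler_norm_sum _ _ _) _; apply: ler_sum => k _.
  by rewrite normrM ger0_norm.
(* The column sums force the total excess to vanish. *)
have : \sum_s excess s = 0.
  rewrite sumrB exchange_big /=.
  under eq_bigr => k _ do rewrite -mulr_suml col_sum.
  by rewrite -mulr_sumr subrr.
by move/psumr_eq0P => /(_ (fun s _ => excess_ge0 s) s0 isT) /eqP; rewrite subr_eq0 => /eqP.
Qed.

Section Surjections.
Local Open Scope nat_scope.

Definition surj (n a : nat) : nat := a`! * stirling2 n a.

Lemma stirling2_small n a : n < a -> stirling2 n a = 0.
Proof.
elim: n a => [|n IH] [|a] //= lt_na.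
by rewrite (IH a.+1) ?(IH a) ?muln0 // ltnW.
Qed.

Lemma stirling2_diag n : stirling2 n n = 1.
Proof. by elim: n => [|n IH] //=; rewrite IH stirling2_small ?muln0. Qed.

Lemma surjS0 n : surj n.+1 0 = 0.
Proof. by rewrite /surj /= muln0. Qed.

Lemma surj0S a : surj 0 a.+1 = 0.
Proof. by rewrite /surj /= muln0. Qed.

Lemma surjSS n a : surj n.+1 a.+1 = a.+1 * (surj n a.+1 + surj n a).
Proof. rewrite /surj /= factS; ring. Qed.

Lemma surj_small n a : n < a -> surj n a = 0.
Proof. by move=> lt_na; rewrite /surj stirling2_small ?muln0. Qed.

Lemma surj_diag n : surj n n = n`!.
Proof. by rewrite /surj stirling2_diag muln1. Qed.

(* Classify the surjections onto a.+1 points by the set of the j points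
   that are not mapped to the last one. *)
Lemma surj_binomial n a : surj n a.+1 = \sum_(j < n) 'C(n, j) * surj j a.
Proof.
elim: n a => [|n IH] a; first by rewrite big_ord0 surj0S.
rewrite big_ord_recl /= bin0 mul1n.
under eq_bigr => j _ do rewrite /bump /= add1n binS mulnDl.
rewrite big_split /=.
have sum_shift : \sum_(j < n) 'C(n, j) * surj j.+1 a = a * (surj n a.+1 + surj n a).
  case: a => [|a].
    by rewrite mul0n big1 // => j _; rewrite surjS0 muln0.
  rewrite (IH a.+1) (IH a) -big_split big_distrr /=.
  by apply: eq_bigr => j _; rewrite surjSS; ring.
have sum_binS : surj 0 a + \sum_(j < n) 'C(n, j.+1) * surj j.+1 a
                = surj n a.+1 + surj n a.
  have := big_ord_recl n (fun j : 'I_n.+1 => 'C(n, j) * surj j a).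
  by rewrite /= bin0 mul1n => <-; rewrite big_ord_recr /= binn mul1n -IH.
by rewrite addnA sum_binS sum_shift surjSS; ring.
Qed.

End Surjections.

Section FubiniOperator.
Variable R : comNzRingType.
Implicit Types p q : {poly R}.

Definition fubini_poly n : {poly R} := \poly_(t < n.+1) (surj n (n - t))%:R.

Lemma coef_fubini_poly n t :
  (fubini_poly n)`_t = if (t <= n)%N then (surj n (n - t))%:R else 0.
Proof. by rewrite coef_poly ltnS. Qed.

Lemma fubini_poly0 : fubini_poly 0 = 1.
Proof. by apply/polyP => t; rewrite coef1 coef_fubini_poly; case: t. Qed.

Lemma fubini_poly_rec n : (0 < n)%N ->
  'X * fubini_poly n = \sum_(j < n) 'C(n, j)%:R *: ('X^(n - j) * fubini_poly j).
Proof.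
move=> n_gt0; apply/polyP => -[|t]; rewrite coefXM coef_sum /=.
  by rewrite big1 // => j _; rewrite coefZ coefXnM subn_gt0 ltn_ord mulr0.
rewrite coef_fubini_poly; case: (ltnP t n) => [lt_tn|le_nt].
  rewrite ltnW // (_ : n - t = (n - t.+1).+1)%N; last lia.
  rewrite surj_binomial natr_sum; apply: eq_bigr => j _.
  rewrite coefZ coefXnM natrM coef_fubini_poly.
  case: ltnP => [lt_t|le_t]; first by rewrite surj_small ?mulr0 //; lia.
  rewrite (_ : t.+1 - (n - j) <= j)%N; last lia.
  by congr (_ * (surj _ _)%:R); have := ltn_ord j; lia.
rewrite big1 => [|j _].
  case: ifP => // le_tn; rewrite (_ : t = n); last lia.
  by rewrite subnn; case: n n_gt0 {le_nt le_tn}.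
rewrite coefZ coefXnM coef_fubini_poly; case: ltnP => _; first by rewrite mulr0.
by rewrite ifF ?mulr0 //; have := ltn_ord j; lia.
Qed.

Definition fubini_op n p : {poly R} :=
  \sum_(m < n.+1) p`_m *: ('X^m * fubini_poly (n - m)).

Fact fubini_op_is_linear n : linear (fubini_op n).
Proof.
move=> a p q; rewrite /fubini_op scaler_sumr -big_split; apply: eq_bigr => m _.
by rewrite coefD coefZ scalerDl scalerA.
Qed.

HB.instance Definition _ n :=
  GRing.isLinear.Build R {poly R} {poly R} _ (fubini_op n) (fubini_op_is_linear n).

Lemma coef_fubini_op n p t : (fubini_op n p)`_t =
  if (t <= n)%N then \sum_(m < n.+1) p`_m * (surj (n - m) (n - t))%:R else 0.
Proof.
rewrite /fubini_op coef_sum; case: leqP => le_tn.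
  apply: eq_bigr => m _; rewrite coefZ coefXnM coef_fubini_poly.
  case: ltnP => lt_tm; first by rewrite surj_small ?mulr0 //; have := ltn_ord m; lia.
  by rewrite ifT; [congr (_ * (surj _ _)%:R) | ]; lia.
rewrite big1 // => m _; rewrite coefZ coefXnM coef_fubini_poly.
case: ltnP => _; first by rewrite mulr0.
by rewrite ifF ?mulr0 //; have := ltn_ord m; lia.
Qed.

Lemma coef_fubini_op_triangular n p t : (t <= n)%N ->
  (fubini_op n p)`_t = p`_t * (n - t)`!%:R + \sum_(m < t) p`_m * (surj (n - m) (n - t))%:R.
Proof.
move=> le_tn; set F := fun m => p`_m * (surj (n - m) (n - t))%:R.
rewrite coef_fubini_op le_tn -!(big_mkord xpredT F).
rewrite (big_cat_nat _ (n := t.+1)) //= [X in _ + X]big1_seq ?addr0 => [|m].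
  by rewrite big_nat_recr //= addrC /F /= surj_diag.
by rewrite /= mem_index_iota => /andP[lt_tm lt_mn]; rewrite /F surj_small ?mulr0 //; lia.
Qed.

Lemma fubini_opXn n m : (m <= n)%N -> fubini_op n 'X^m = 'X^m * fubini_poly (n - m).
Proof.
move=> le_mn; rewrite /fubini_op (bigD1 (Ordinal (le_mn : (m < n.+1)%N))) //=.
rewrite coefXn eqxx scale1r big1 ?addr0 // => k ne_km.
have ne_km' : k != m :> nat by apply: contra ne_km => /eqP km; apply/eqP/val_inj.
by rewrite coefXn (negbTE ne_km') scale0r.
Qed.

Lemma fubini_op1 n : fubini_op n 1 = fubini_poly n.
Proof. by have := @fubini_opXn n 0 (leq0n n); rewrite expr0 mul1r subn0. Qed.

Lemma fubini_opX n p : fubini_op n.+1 ('X * p) = 'X * fubini_op n p.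
Proof.
rewrite /fubini_op big_ord_recl coefXM /= scale0r add0r mulr_sumr.
apply: eq_bigr => m _; rewrite coefXM /= exprS -mulrA -scalerAr.
by rewrite /bump /= add1n subSS.
Qed.

Lemma fubini_op_XaddC_exp n : (0 < n)%N ->
  fubini_op n (('X + 1) ^+ n) = ('X + 1) * fubini_poly n.
Proof.
move=> n_gt0; rewrite exprDn linear_sum.
under eq_bigr => j _ do rewrite expr1n mulr1 -scaler_nat linearZ /=
  fubini_opXn ?leq_subr // (subKn (ltn_ord j : (j <= n)%N)).
rewrite big_ord_recr /= subnn expr0 mul1r binn scale1r.
by rewrite mulrDl mul1r fubini_poly_rec.
Qed.

(* The ascent polynomial of the permutations of [n+1] ending with k+1. *)
Fixpoint asc_poly n k : {poly R} :=
  if n is n'.+1 then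
    'X * \sum_(0 <= j < k) asc_poly n' j + \sum_(k <= j < n'.+1) asc_poly n' j
  else 1.

Lemma asc_polyS n k : (k <= n)%N ->
  asc_poly n.+1 k.+1 = asc_poly n.+1 k + ('X - 1) * asc_poly n k.
Proof.
by move=> le_kn /=; rewrite big_nat_recr //= (@big_ltn _ _ _ k n.+1) ?ltnS //; ring.
Qed.

Lemma coef_asc_polyS n k t : (asc_poly n.+1 k)`_t =
  (if t is t'.+1 then \sum_(0 <= j < k) (asc_poly n j)`_t' else 0)
  + \sum_(k <= j < n.+1) (asc_poly n j)`_t.
Proof. by rewrite /= coefD coefXM !coef_sum; case: t. Qed.

Lemma size_asc_poly n k : (size (asc_poly n k) <= n.+1)%N.
Proof.
elim: n k => [|n IH] k; first by rewrite /= size_poly1.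
have coef_high j u : (n.+1 <= u)%N -> (asc_poly n j)`_u = 0.
  by move=> le_u; apply: (leq_sizeP _ _ (IH j)).
apply/leq_sizeP => -[|t] lt_t //; rewrite coef_asc_polyS.
by rewrite !big1 ?addr0 // => j _; apply: coef_high; lia.
Qed.

Lemma asc_poly_at1 n k : (k <= n)%N -> (asc_poly n k).[1] = n`!%:R.
Proof.
elim: n k => [|n IH] k le_kn; first by rewrite /= hornerC.
rewrite /= hornerD hornerM hornerX mul1r !horner_sum.
have at1 j : (j < n.+1)%N -> (asc_poly n j).[1] = n`!%:R by move=> lt_j; apply: IH.
rewrite (eq_big_nat _ _ (F2 := fun _ => n`!%:R)) => [|j /andP[_ lt_j]]; last by apply: at1; lia.
rewrite [X in _ + X](eq_big_nat _ _ (F2 := fun _ => n`!%:R)) => [|j /andP[_ /at1 //]].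
by rewrite !sumr_const_nat -mulrnDr subn0 subnKC // factS natrM mulrC mulr_natr.
Qed.

Lemma asc_poly_shift n k : (k <= n)%N ->
  asc_poly n k \Po ('X + 1) = fubini_op n (('X + 1) ^+ k).
Proof.
elim: n k => [|n IH] k.
  by rewrite leqn0 => /eqP -> /=; rewrite expr0 fubini_op1 fubini_poly0 comp_polyC.
elim: k => [_|k IHk lt_kn]; last first.
  rewrite asc_polyS // rmorphD rmorphM /= IHk ?(ltnW lt_kn) // IH //.
  rewrite comp_polyB comp_polyX -polyC1 comp_polyC polyC1 addrK.
  by rewrite -fubini_opX -linearD exprS mulrDl mul1r addrC.
rewrite /= big_geq // mulr0 add0r expr0 fubini_op1 rmorph_sum /= big_mkord.
rewrite (eq_bigr (fun j : 'I_n.+1 => fubini_op n (('X + 1) ^+ j))) => [|j _]; last first.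
  by rewrite IH // -ltnS.
(* k = 0: cancel X, using (X + 1)^(n+1) = 1 + X * sum_(j <= n) (X + 1)^j. *)
rewrite -linear_sum; apply: lreg_polyX; apply: (@addIr _ (fubini_poly n.+1)).
have := fubini_op_XaddC_exp (ltn0Sn n).
rewrite exprD1_geometric linearD /= fubini_op1 fubini_opX => eq_top.
by rewrite addrC eq_top mulrDl mul1r.
Qed.

Definition asc_op n p : {poly R} := \sum_(k < n.+1) p`_k *: asc_poly n k.

Lemma coef_asc_op n p t : (asc_op n p)`_t = \sum_(k < n.+1) p`_k * (asc_poly n k)`_t.
Proof. by rewrite /asc_op coef_sum; apply: eq_bigr => k _; rewrite coefZ. Qed.

Lemma fubini_op_shift n q : (size q <= n.+1)%N ->
  fubini_op n q \Po ('X - 1) = asc_op n (q \Po ('X - 1)).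
Proof.
move=> size_q; set r := q \Po ('X - 1).
have size_r : (size r <= n.+1)%N.
  apply: leq_trans (size_comp_poly_leq _ _) _.
  by rewrite -polyC1 -polyCN size_XaddC muln1; case: (size q) size_q.
rewrite -[q in fubini_op _ q](comp_poly_Xsub1K q) -/r.
rewrite -[r in fubini_op _ (r \Po _)](coefK_wide size_r) poly_def.
rewrite (linear_sum (comp_poly ('X + 1))) (linear_sum (fubini_op n)).
rewrite (linear_sum (comp_poly ('X - 1))); apply: eq_bigr => k _ /=.
rewrite comp_polyZ linearZ /= comp_polyZ rmorphXn /= comp_polyX.
by rewrite -asc_poly_shift ?comp_poly_Xadd1K // -ltnS.
Qed.

End FubiniOperator.

(* The diagonal of [fubini_op n] is (n - t)!, and n! occurs there only at t = 0. *)
Lemma fubini_op_eigen_eq0 (R : numDomainType) n (e : {poly R}) :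
  (1 < n)%N -> (size e <= n.+1)%N -> fubini_op n e = n`!%:R *: e -> e`_0 = 0 -> e = 0.
Proof.
move=> gt1_n size_e eig_e e0; apply/polyP => t; rewrite coef0.
case: (ltnP n t) => [lt_nt|le_tn]; first by apply: (leq_sizeP _ _ size_e).
elim/ltn_ind: t le_tn => -[_ _|t IH le_tn] //.
have : (fubini_op n e)`_t.+1 = (n`!%:R *: e)`_t.+1 by rewrite eig_e.
rewrite coefZ coef_fubini_op_triangular //.
rewrite big1 => [|m _]; last by rewrite IH ?mul0r //; have := ltn_ord m; lia.
move/eqP; rewrite addr0 mulrC -subr_eq0 -mulrBl mulf_eq0 subr_eq0 eqr_nat.
have lt_fact : ((n - t.+1)`! < n`!)%N by apply: fact_ltn_gt1 => //; lia.
by case/orP => [/eqP eq_fact|/eqP //]; rewrite eq_fact ltnn in lt_fact.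
Qed.

Section AscentPositivity.
Variable R : numDomainType.
Notation asc_poly := (@asc_poly R).

Lemma coef_asc_poly_ge0 n k t : 0 <= (asc_poly n k)`_t.
Proof.
elim: n k t => [|n IH] k t; first by rewrite /= coef1; case: (t == 0)%N.
rewrite coef_asc_polyS; apply: addr_ge0; last exact: sumr_ge0.
by case: t => [|t]; [|apply: sumr_ge0].
Qed.

Lemma coef0_asc_poly0_gt0 n : 0 < (asc_poly n 0)`_0.
Proof.
elim: n => [|n IH]; first by rewrite /= coef1.
rewrite coef_asc_polyS add0r; apply: (sumr_nat_gt0 (j := 0)) => //.
by move=> j; apply: coef_asc_poly_ge0.
Qed.

Lemma coef_asc_poly_diag_gt0 n : 0 < (asc_poly n n)`_n.
Proof.
elim: n => [|n IH]; first by rewrite /= coef1.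
rewrite coef_asc_polyS [X in _ + X]big_geq // addr0.
apply: (sumr_nat_gt0 (j := n)) => //; [lia | move=> j; apply: coef_asc_poly_ge0].
Qed.

Lemma coef_asc_poly_gt0 n k t : (k <= n)%N -> (0 < t < n)%N -> 0 < (asc_poly n k)`_t.
Proof.
elim: n k t => [|n IH] k [|t] //= le_kn lt_tn.
rewrite coef_asc_polyS; case: k le_kn => [_|k le_kn].
  rewrite big_geq // add0r; have [<-|ne_tn] := eqVneq t.+1 n.
    apply: (sumr_nat_gt0 (j := t.+1)); first lia.
      by move=> j; apply: coef_asc_poly_ge0.
    exact: coef_asc_poly_diag_gt0.
  apply: (sumr_nat_gt0 (j := 0)) => //; first by move=> j; apply: coef_asc_poly_ge0.
  by apply: IH => //; lia.
apply: ltr_wpDr; first by apply: sumr_ge0 => j _; apply: coef_asc_poly_ge0.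
apply: (sumr_nat_gt0 (j := 0)) => //; first by move=> j; apply: coef_asc_poly_ge0.
case: t lt_tn => [_|t lt_tn]; first exact: coef0_asc_poly0_gt0.
by apply: IH; lia.
Qed.

End AscentPositivity.

Lemma asc_op_eigen_norm (R : realDomainType) n (p : {poly R}) :
  (size p <= n.+1)%N -> asc_op n p = n`!%:R *: p ->
  asc_op n (\poly_(k < n.+1) `|p`_k|) = n`!%:R *: \poly_(k < n.+1) `|p`_k|.
Proof.
move=> size_p eig_p; apply/polyP => s; rewrite coefZ coef_asc_op coef_poly.
case: ltnP => [lt_s|le_s]; last first.
  by rewrite mulr0 big1 // => k _; rewrite (leq_sizeP _ _ (size_asc_poly R n k)) ?mulr0.
under eq_bigr => k _ do rewrite coef_poly ltn_ord mulrC.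
apply: (@eigenvector_norm _ _ (fun s k => (asc_poly R n k)`_s) (fun k => p`_k) _
          _ _ _ (Ordinal lt_s)) => /=.
- by move=> ? ?; apply: coef_asc_poly_ge0.
- by move=> k; rewrite -(horner1_coef_wide (size_asc_poly R n k)) (asc_poly_at1 _ (leq_ord k)).
- move=> t; rewrite -coefZ -eig_p coef_asc_op.
  by apply: eq_bigr => k _; rewrite mulrC.
Qed.

Lemma fsh_surj a b : fsh a b = (surj b a)%:R.
Proof. by case: a => [|a]; case: b => [|b]; rewrite /= ?surj0S ?surjS0. Qed.

Lemma size_Ftail d n : size (Ftail d n) = n.+1.
Proof. by elim: n => [|n IH] //=; rewrite IH. Qed.

Lemma nth_Ftail d m n j : (n <= m)%N ->
  nth 0 (Ftail d m) (j + (m - n)) = nth 0 (Ftail d n) j.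
Proof.
elim: m => [|m IH] le_nm; first by move: le_nm; rewrite leqn0 => /eqP ->; rewrite addn0.
case: (ltngtP n m.+1) le_nm => // [lt_nm|->] _; last by rewrite subnn addn0.
by rewrite (_ : j + (m.+1 - n) = (j + (m - n)).+1)%N /= ?IH //; lia.
Qed.

Lemma Fsh_nth d n j : (n <= d.+1)%N -> nth 0 (Ftail d n) j = Fsh d (j + (d.+1 - n)).
Proof. by move=> le_n; rewrite /Fsh nth_Ftail. Qed.

Lemma Fsh_top d : Fsh d d.+1 = 1.
Proof. by rewrite -[d.+1]add0n -[in Fsh _ _](subn0 d.+1) -Fsh_nth. Qed.

Lemma Fsh_rec d a : (a < d.+1)%N ->
  Fsh d a = ((d.+1)`!%:R - a`!%:R)^-1 *
            \sum_(k < d.+1 - a) (surj (a + k.+1) a)%:R * Fsh d (a + k.+1).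
Proof.
move=> lt_ad; have -> : Fsh d a = nth 0 (Ftail d (d.+1 - a)) 0.
  by rewrite Fsh_nth ?leq_subr // add0n subKn // ltnW.
rewrite (_ : d.+1 - a = (d.+1 - a.+1).+1)%N /= ?size_Ftail; last lia.
rewrite (_ : d.+1 - (d.+1 - a.+1).+1 = a)%N; last lia.
congr (_ * _); apply: eq_bigr => k _; rewrite fsh_surj Fsh_nth; last lia.
by congr (_ * Fsh _ _); lia.
Qed.

Lemma Fsh_eigen d a : (0 < d)%N -> (a <= d.+1)%N ->
  \sum_(b < d.+2) (surj b a)%:R * Fsh d b = (d.+1)`!%:R * Fsh d a.
Proof.
move=> d_gt0 le_ad; case: (ltngtP a d.+1) le_ad => // [lt_ad|->] _; last first.
  rewrite big_ord_recr /= surj_diag Fsh_top big1 ?add0r // => b _.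
  by rewrite surj_small ?mul0r.
pose F b := (surj b a)%:R * Fsh d b.
rewrite -(big_mkord xpredT F) (big_cat_nat _ (n := a.+1)) //=; last by lia.
rewrite big_nat_recr //= big1_seq ?add0r => [|b]; last first.
  by rewrite mem_index_iota => /andP[_ lt_ba]; rewrite /F surj_small ?mul0r.
rewrite -{1}(add0n a.+1) big_addn big_mkord subSS /F surj_diag.
have fact_neq : (d.+1)`!%:R - a`!%:R != 0 :> rat.
  rewrite subr_eq0 eqr_nat neq_ltn orbC fact_ltn_gt1 //.
have -> : \sum_(k < d.+1 - a) (surj (k + a.+1) a)%:R * Fsh d (k + a.+1)
          = ((d.+1)`!%:R - a`!%:R) * Fsh d a.
  rewrite (Fsh_rec lt_ad) mulrA mulfV // mul1r.
  by apply: eq_bigr => k _; rewrite addnC addnS.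
by ring.
Qed.

Lemma coef_Fpoly d m : (Fpoly d)`_m = if (m <= d.+1)%N then Fsh d (d.+1 - m) else 0.
Proof.
rewrite /Fpoly coef_sum; under eq_bigr do rewrite coefZ coefXn.
case: leqP => [le_m|lt_m]; last first.
  rewrite big1 // => a _; have ne_m : m != (d.+1 - a)%N by lia.
  by rewrite (negbTE ne_m) mulr0.
have lt_idx : (d.+1 - m < d.+2)%N by lia.
rewrite (bigD1 (Ordinal lt_idx)) //= subKn // eqxx mulr1 big1 ?addr0 // => a ne_a.
have ne_m : m != (d.+1 - a)%N.
  by apply: contra ne_a => /eqP eq_m; apply/eqP/val_inj => /=; have := ltn_ord a; lia.
by rewrite (negbTE ne_m) mulr0.
Qed.

Lemma coef0_Fpoly d : (Fpoly d)`_0 = 1.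
Proof. by rewrite coef_Fpoly subn0 Fsh_top. Qed.

Lemma size_Fpoly d : (size (Fpoly d) <= d.+2)%N.
Proof. by apply/leq_sizeP => m lt_m; rewrite coef_Fpoly ifF //; apply/negbTE; lia. Qed.

Lemma Fpoly_eigen d : (0 < d)%N -> fubini_op d.+1 (Fpoly d) = (d.+1)`!%:R *: Fpoly d.
Proof.
move=> d_gt0; apply/polyP => t; rewrite coef_fubini_op coefZ coef_Fpoly.
case: leqP => le_t; last by rewrite mulr0.
under eq_bigr => m _ do rewrite coef_Fpoly leq_ord.
rewrite (reindex_inj rev_ord_inj) /=.
under eq_bigr => m _ do rewrite subSS subKn ?leq_ord // mulrC.
by rewrite Fsh_eigen //; lia.
Qed.

Lemma size_Hpoly d : (size (Hpoly d) <= d.+2)%N.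
Proof. by rewrite size_comp_poly2 ?size_Fpoly // -polyC1 -polyCN size_XaddC. Qed.

Lemma Hpoly_at1 d : (Hpoly d).[1] = 1.
Proof. by rewrite horner_comp !hornerE subrr horner_coef0 coef0_Fpoly. Qed.

Lemma Hpoly_eigen d : (0 < d)%N -> asc_op d.+1 (Hpoly d) = (d.+1)`!%:R *: Hpoly d.
Proof.
by move=> d_gt0; rewrite -fubini_op_shift ?size_Fpoly // Fpoly_eigen // comp_polyZ.
Qed.

Lemma asc_op_eigen_uniq d (q : {poly rat}) : (0 < d)%N -> (size q <= d.+2)%N ->
  asc_op d.+1 q = (d.+1)`!%:R *: q -> q = q.[1] *: Hpoly d.
Proof.
move=> d_gt0 size_q eig_q; set p := q \Po ('X + 1).
have size_p : (size p <= d.+2)%N by rewrite size_comp_poly2 // -polyC1 size_XaddC.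
have eig_p : fubini_op d.+1 p = (d.+1)`!%:R *: p.
  rewrite -[LHS]comp_poly_Xsub1K fubini_op_shift // comp_poly_Xadd1K eig_q.
  by rewrite comp_polyZ.
have p_eq : p = p`_0 *: Fpoly d.
  apply/eqP; rewrite -subr_eq0; apply/eqP/(fubini_op_eigen_eq0 (n := d.+1)) => //.
  - rewrite (leq_trans (size_polyD _ _)) // geq_max size_p size_polyN.
    exact: leq_trans (size_scale_leq _ _) (size_Fpoly d).
  - by rewrite linearB linearZ /= Fpoly_eigen // eig_p scalerBr scalerA mulrC -scalerA.
  - by rewrite coefB coefZ coef0_Fpoly mulr1 subrr.
rewrite -[LHS](comp_poly_Xadd1K q) -/p {1}p_eq comp_polyZ -horner_coef0.
by rewrite horner_comp !hornerE.
Qed.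

Lemma coef_Hpoly_ge0 d t : (0 < d)%N -> 0 <= (Hpoly d)`_t.
Proof.
move=> d_gt0; set h := Hpoly d.
have [lt_t|le_t] := ltnP t d.+2; last by rewrite (leq_sizeP _ _ (size_Hpoly d)).
set g := \poly_(k < d.+2) `|h`_k|.
have g_eq : g = g.[1] *: h.
  apply: asc_op_eigen_uniq => //; first exact: size_poly.
  by apply: asc_op_eigen_norm; [apply: size_Hpoly | apply: Hpoly_eigen].
have g1_ge0 : 0 <= g.[1].
  rewrite (horner1_coef_wide (size_poly _ _)); apply: sumr_ge0 => k _.
  by rewrite coef_poly ltn_ord.
have : `|h`_t| = g.[1] * h`_t by rewrite -coefZ -g_eq coef_poly lt_t.
have [//|ht_lt0 norm_eq] := lerP 0 h`_t.
have : `|h`_t| <= 0 by rewrite norm_eq mulr_ge0_le0 // ltW.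
by rewrite normr_le0 => /eqP ht0; rewrite ht0 ltxx in ht_lt0.
Qed.

Lemma coef_Hpoly_gt0 d t : (0 < d)%N -> (0 < t <= d)%N -> 0 < (Hpoly d)`_t.
Proof.
move=> d_gt0 t_range; have lam_gt0 : 0 < (d.+1)`!%:R :> rat by rewrite ltr0n fact_gt0.
rewrite -(pmulr_rgt0 _ lam_gt0) -coefZ -Hpoly_eigen // coef_asc_op.
apply: sumr_mul_gt0 => [k|k|]; first exact: coef_Hpoly_ge0.
  by apply: coef_asc_poly_gt0; rewrite ?leq_ord.
by rewrite -(horner1_coef_wide (size_Hpoly d)) Hpoly_at1 oner_neq0.
Qed.

Theorem lemma2p12 (d i : nat) :
  (1 <= d)%N -> (1 <= i <= d)%N -> 0 < Hcoef i d.
Proof.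
move=> d_gt0 /andP[i_gt0 le_id]; rewrite /Hcoef.
by apply: coef_Hpoly_gt0 => //; lia.
Qed.
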